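(* Let $\mathcal{R}$ be a finite set of $K$ records, $n\in\mathbb{N}$, $\theta\in(0,1)$, $p$ a pmf on $\mathcal{R}$, and $\mathcal{F}:\mathcal{H}^n\times\mathcal{H}^n\to[0,\infty)$ a distortion measure. Then there exists a database sanitizing mechanism $(\mathbb{W}(\cdot|\underline a):\underline a\in\mathcal{R}^n)$ such that (i) $\mathbb{W}(\cdot|\underline a)=\mathbb{W}(\cdot|\underline{\tilde a})$ whenever $\mathtt{h}(\underline a)=\mathtt{h}(\underline{\tilde a})$; (ii) $\mathbb{W}(\underline b|\underline a)/\mathbb{W}(\underline b|\underline{\hat a})\in[\theta,1/\theta]$ for every pair of neighboring databases $\underline a,\underline{\hat a}$ and every database $\underline b$; and (iii) $D^n(\mathbb{W})\le D^n(\mathbb{U})$ for every $\theta$-DP database sanitizing mechanism $\mathbb{U}$.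
   Context: A database is $\underline r=(r_1,\dots,r_n)\in\mathcal{R}^n$; its histogram $\mathtt{h}(\underline r)\in\mathcal{H}^n:=\{(h_1,\dots,h_K)\in\mathbb{Z}^K:h_k\ge0,\sum_kh_k=n\}$ has $k$-th entry the number of $i$ with $r_i=a_k$, where $\mathcal{R}=\{a_1,\dots,a_K\}$. Databases are neighboring if they differ in exactly one entry. A database sanitizing mechanism assigns to each $\underline r\in\mathcal{R}^n$ a pmf $\mathbb{W}(\cdot|\underline r)$ on $\mathcal{R}^n$; it is $\theta$-DP if $\theta\mathbb{W}(\underline s|\underline r)\le\mathbb{W}(\underline s|\underline{\hat r})\le\theta^{-1}\mathbb{W}(\underline s|\underline r)$ for all neighboring $\underline r,\underline{\hat r}$ and all $\underline s$. Its expected distortion is $D^n(\mathbb{W})=\sum_{\underline r,\underline s\in\mathcal{R}^n}\prod_{i=1}^n p(r_i)\,\mathbb{W}(\underline s|\underline r)\,\mathcal{F}(\mathtt{h}(\underline r),\mathtt{h}(\underline s))$. *)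

From HB Require Import structures.
From mathcomp Require Import all_boot all_order all_algebra.
From mathcomp Require Import reals.
Set Implicit Arguments. Unset Strict Implicit. Unset Printing Implicit Defensive.
Import Order.TTheory GRing.Theory Num.Theory.
Local Open Scope ring_scope.

Definition database (Rec : finType) (n : nat) := {ffun 'I_n -> Rec}.

Definition hist (Rec : finType) (n : nat) (r : database Rec n) : {ffun Rec -> nat} :=
  [ffun a => #|[set i | r i == a]|].

Definition is_hist (Rec : finType) (n : nat) (h : {ffun Rec -> nat}) : Prop :=
  (\sum_(a : Rec) h a)%N = n.

Definition neighbors (Rec : finType) (n : nat) (r r' : database Rec n) : Prop :=
  #|[set i | r i != r' i]| = 1%N.

(* A database sanitizing mechanism: W r s = W(s | r), a pmf in s for each r. *)
Definition mechanism (T : realType) (Rec : finType) (n : nat)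
  (W : database Rec n -> database Rec n -> T) : Prop :=
  forall r, (forall s, 0 <= W r s) /\ \sum_(s : database Rec n) W r s = 1.

Definition is_DP (T : realType) (Rec : finType) (n : nat) (theta : T)
  (W : database Rec n -> database Rec n -> T) : Prop :=
  forall r rh s, neighbors r rh ->
    theta * W r s <= W rh s /\ W rh s <= theta^-1 * W r s.

Definition distortion (T : realType) (Rec : finType) (n : nat) (p : Rec -> T)
  (F : {ffun Rec -> nat} -> {ffun Rec -> nat} -> T)
  (W : database Rec n -> database Rec n -> T) : T :=
  \sum_(r : database Rec n) \sum_(s : database Rec n)
     (\prod_(i < n) p (r i)) * W r s * F (hist r) (hist s).

(* Averaging a mechanism over the n! permutations of the record positions
   yields a mechanism that depends on its input only through the histogram.
   The average is still a theta-DP mechanism, because permuting positions maps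
   neighbouring databases to neighbouring databases, and it has the same
   expected distortion, because the product pmf and the histogram of a database
   are invariant under permutation.  So it suffices to find some optimal
   theta-DP mechanism: viewed as vectors in [0,1]^(R^n x R^n), the theta-DP
   mechanisms form a compact set, nonempty since it contains the uniform
   mechanism, on which the distortion is continuous; hence a minimiser exists. *)

From mathcomp Require Import all_boot all_order all_algebra fingroup perm.
From mathcomp Require Import reals classical_sets boolp topology normedtype derive.
Import Order.TTheory GRing.Theory Num.Theory.
Import numFieldTopology.Exports numFieldNormedType.Exports.
Local Open Scope ring_scope.

Section PermuteDatabase.
Context {Rec : finType} {n : nat}.
Notation D := (database Rec n).

Definition permute_db (r : D) (s : 'S_n) : D := [ffun i => r (s i)].

Lemma permute_db_inj s : injective (permute_db^~ s).
Proof.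
move=> r r' /ffunP eq_rs; apply/ffunP => i.
by have := eq_rs (s^-1 i)%g; rewrite !ffunE permKV.
Qed.

Lemma permute_dbM (r : D) s t : permute_db (permute_db r s) t = permute_db r (t * s)%g.
Proof. by apply/ffunP => i; rewrite !ffunE permM. Qed.

Lemma hist_permute_db (r : D) s : hist (permute_db r s) = hist r.
Proof.
apply/ffunP => a; rewrite !ffunE -[RHS](card_preimset _ (@perm_inj _ s)).
by apply: eq_card => i; rewrite !inE ffunE.
Qed.

Lemma neighbors_permute_db {r r' : D} s :
  neighbors r r' -> neighbors (permute_db r s) (permute_db r' s).
Proof.
rewrite /neighbors => <-; rewrite -[RHS](card_preimset _ (@perm_inj _ s)).
by apply: eq_card => i; rewrite !inE !ffunE.
Qed.

Lemma count_mem_hist (r : D) a : count_mem a [tuple r i | i < n] = hist r a.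
Proof.
rewrite ffunE /= count_map cardE size_filter enumT.
by apply: eq_count => i; rewrite /= inE.
Qed.

Lemma hist_eq_permute_db (r r' : D) :
  hist r = hist r' -> exists s : 'S_n, r' = permute_db r s.
Proof.
move=> eq_h.
have /tuple_permP [s eq_rs] : perm_eq [tuple r' i | i < n] [tuple r i | i < n].
  by apply/allP => a _; rewrite /= !count_mem_hist eq_h.
exists s; apply/ffunP => i.
have /(congr1 (fun t => tnth t i)) := val_inj eq_rs.
by rewrite !tnth_mktuple ffunE.
Qed.

Lemma prod_permute_db (R : comPzSemiRingType) (f : Rec -> R) (r : D) s :
  \prod_(i < n) f (permute_db r s i) = \prod_(i < n) f (r i).
Proof.
under eq_bigr do rewrite ffunE.
by rewrite [RHS](reindex_inj (@perm_inj _ s)).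
Qed.

End PermuteDatabase.

Section Symmetrize.
Context {T : realType} {Rec : finType} {n : nat}.
Notation D := (database Rec n).
Implicit Types (W : D -> D -> T) (theta : T).

Definition symmetrize W : D -> D -> T :=
  fun r s => #|{: 'S_n}|%:R^-1 * \sum_(σ : 'S_n) W (permute_db r σ) s.

Lemma perm_average_const (x : T) : #|{: 'S_n}|%:R^-1 * \sum_(σ : 'S_n) x = x.
Proof.
rewrite sumr_const -[x *+ _]mulr_natl mulrA mulVf ?mul1r // pnatr_eq0 -lt0n.
by apply/card_gt0P; exists 1%g.
Qed.

Lemma mechanism_symmetrize W : mechanism W -> mechanism (symmetrize W).
Proof.
move=> mechW r; split=> [s|].
  rewrite mulr_ge0 ?invr_ge0 ?ler0n ?sumr_ge0 // => σ _.
  by case: (mechW (permute_db r σ)).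
rewrite -mulr_sumr exchange_big /=.
under eq_bigr do rewrite (proj2 (mechW _)).
exact: perm_average_const.
Qed.

Lemma is_DP_symmetrize theta W : is_DP theta W -> is_DP theta (symmetrize W).
Proof.
move=> dpW r r' s nb_rr'.
have DP_σ σ := dpW _ _ s (neighbors_permute_db σ nb_rr').
rewrite /symmetrize; split; [rewrite mulrCA | rewrite [leRHS]mulrCA];
  rewrite ler_wpM2l ?invr_ge0 ?ler0n // mulr_sumr ler_sum // => σ _;
  by case: (DP_σ σ).
Qed.

Lemma symmetrize_hist W r r' : hist r = hist r' -> symmetrize W r = symmetrize W r'.
Proof.
move=> /hist_eq_permute_db [t ->]; apply/funext => s; rewrite /symmetrize.
rewrite [in LHS](reindex_inj (mulIg t)) /=.
by under eq_bigr do rewrite -permute_dbM.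
Qed.

Variables (p : Rec -> T) (F : {ffun Rec -> nat} -> {ffun Rec -> nat} -> T).

Lemma distortion_average (I : finType) (c : T) (G : I -> D -> D -> T) :
  distortion p F (fun r s => c * \sum_(i : I) G i r s) =
  c * \sum_(i : I) distortion p F (G i).
Proof.
rewrite /distortion mulr_sumr.
under [RHS]eq_bigr do rewrite mulr_sumr; rewrite [RHS]exchange_big /=.
apply: eq_bigr => r _.
under [RHS]eq_bigr do rewrite mulr_sumr; rewrite [RHS]exchange_big /=.
apply: eq_bigr => s _.
rewrite mulr_sumr mulr_sumr mulr_suml; apply: eq_bigr => i _.
by rewrite !mulrA [_ * c]mulrC.
Qed.

Lemma distortion_permute_db W σ :
  distortion p F (fun r => W (permute_db r σ)) = distortion p F W.
Proof.
rewrite /distortion [RHS](reindex_inj (permute_db_inj σ)) /=.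
apply: eq_bigr => r _; apply: eq_bigr => s _.
by rewrite prod_permute_db hist_permute_db.
Qed.

Lemma distortion_symmetrize W : distortion p F (symmetrize W) = distortion p F W.
Proof.
rewrite distortion_average; under eq_bigr do rewrite distortion_permute_db.
exact: perm_average_const.
Qed.

End Symmetrize.

Section Mechanisms.
Context {T : realType} {Rec : finType} {n : nat}.
Notation D := (database Rec n).

Lemma mechanism_le1 (W : D -> D -> T) r s : mechanism W -> W r s <= 1.
Proof.
move=> /(_ r) [W_ge0 <-]; rewrite (bigD1 s) //= lerDl.
by apply: sumr_ge0 => s' _.
Qed.

Definition uniform_mechanism : D -> D -> T := fun _ _ => #|{: D}|%:R^-1.

Lemma mechanism_uniform : mechanism uniform_mechanism.
Proof.
move=> r; split=> [s|]; first by rewrite invr_ge0 ler0n.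
rewrite sumr_const -[_ *+ _]mulr_natl mulfV // pnatr_eq0 -lt0n.
by apply/card_gt0P; exists r.
Qed.

Lemma is_DP_uniform (theta : T) : 0 < theta <= 1 -> is_DP theta uniform_mechanism.
Proof.
move=> /andP [theta_gt0 theta_le1] r r' s _.
have c_ge0 : 0 <= uniform_mechanism r s by rewrite invr_ge0 ler0n.
by rewrite ler_piMl // ler_peMl // invf_ge1.
Qed.

End Mechanisms.

Local Open Scope classical_set_scope.

Section ClosedSets.
Context {X : topologicalType} {R : realFieldType}.

Lemma continuous_sum (I : Type) (l : seq I) (g : I -> X -> R) :
  (forall i, continuous (g i)) -> continuous (fun x => \sum_(i <- l) g i x).
Proof.
move=> g_cont; elim: l => [|i l IHl].
  by under eq_fun do rewrite big_nil; exact: cst_continuous.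
under eq_fun do rewrite big_cons.
by move=> x; apply: continuousD; [exact: g_cont | exact: IHl].
Qed.

Lemma continuousMl (a : R) {f : X -> R} : continuous f -> continuous (fun x => a * f x).
Proof.
move=> f_cont x.
by apply: (@continuousM _ _ (fun=> a) f); [exact: cst_continuous | exact: f_cont].
Qed.

Lemma continuousMr (b : R) {f : X -> R} : continuous f -> continuous (fun x => f x * b).
Proof.
move=> f_cont x.
by apply: (@continuousM _ _ f (fun=> b)); [exact: f_cont | exact: cst_continuous].
Qed.

Lemma closed_le_continuous (f g : X -> R) :
  continuous f -> continuous g -> closed [set x | f x <= g x].
Proof.
move=> f_cont g_cont.
have gf_cont : continuous (fun x => g x - f x).
  by move=> x; apply: continuousB; [exact: g_cont | exact: f_cont].
rewrite (_ : [set x | _] = (fun x => g x - f x) @^-1` [set y | 0 <= y]).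
  exact (preimage_closed (fun x _ => gf_cont x) (@closed_ge R 0)).
by apply/seteqP; split=> x /=; rewrite subr_ge0.
Qed.

Lemma closed_eq_continuous (f : X -> R) c : continuous f -> closed [set x | f x = c].
Proof. by move=> f_cont; exact (preimage_closed (fun x _ => f_cont x) (@closed_eq R c)). Qed.

Lemma closed_forall (I : Type) (A : I -> set X) :
  (forall i, closed (A i)) -> closed [set x | forall i, A i x].
Proof.
move=> A_closed; rewrite (_ : [set x | _] = \bigcap_i A i); first exact: closed_bigI.
by apply/seteqP; split=> x Ax i //; exact: Ax.
Qed.

Lemma closed_implies (P : Prop) (A : set X) : closed A -> closed [set x | P -> A x].
Proof.
have [HP|nP] := pselect P => A_closed.
  rewrite (_ : [set x | _] = A) //.
  by apply/seteqP; split=> x /=; [exact | move=> Ax _].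
rewrite (_ : [set x | _] = setT) ?closedT //.
by apply/seteqP; split=> // x _ /nP.
Qed.

End ClosedSets.

Section OptimalMechanism.
Context {T : realType} {Rec : finType} {n : nat}.
Notation D := (database Rec n).
Notation N := #|{: D * D}|.

Definition mech_of_rV (v : 'rV[T]_N) : D -> D -> T :=
  fun r s => v ord0 (enum_rank (r, s)).

Definition rV_of_mech (W : D -> D -> T) : 'rV[T]_N :=
  \row_i W (enum_val i).1 (enum_val i).2.

Lemma rV_of_mechK : cancel rV_of_mech mech_of_rV.
Proof.
by move=> W; apply/funext => r; apply/funext => s; rewrite /mech_of_rV mxE enum_rankK.
Qed.

Lemma mech_of_rV_continuous r s : continuous (fun v => mech_of_rV v r s).
Proof. exact: coord_continuous. Qed.

Definition feasible (theta : T) : set 'rV[T]_N :=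
  [set v | mechanism (mech_of_rV v) /\ is_DP theta (mech_of_rV v)].

Lemma closed_feasible theta : closed (feasible theta).
Proof.
apply: closedI; apply: closed_forall => r.
  apply: closedI; first apply: closed_forall => s.
    by apply: closed_le_continuous; [exact: cst_continuous | exact: mech_of_rV_continuous].
  by apply: closed_eq_continuous; apply: continuous_sum => s; exact: mech_of_rV_continuous.
apply: closed_forall => r'; apply: closed_forall => s.
apply: closed_implies; apply: closedI; apply: closed_le_continuous.
- exact/continuousMl/mech_of_rV_continuous.
- exact: mech_of_rV_continuous.
- exact: mech_of_rV_continuous.
- exact/continuousMl/mech_of_rV_continuous.
Qed.

Lemma compact_feasible theta : compact (feasible theta).
Proof.
have feasible_box :
    feasible theta `<=` [set v : 'rV[T]_N | forall i, `[0, 1]%classic (v ord0 i)].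
  move=> v [mech_v _] i /=.
  have -> : v ord0 i = mech_of_rV v (enum_val i).1 (enum_val i).2.
    by rewrite /mech_of_rV -surjective_pairing enum_valK.
  by rewrite in_itv /= mechanism_le1 // andbT; case: (mech_v (enum_val i).1).
apply: (subclosed_compact (closed_feasible theta) _ feasible_box).
exact: (@rV_compact T _ (fun=> `[0, 1]%classic) (fun=> @segment_compact T 0 1)).
Qed.

Variables (p : Rec -> T) (F : {ffun Rec -> nat} -> {ffun Rec -> nat} -> T).

Lemma distortion_continuous : continuous (fun v => distortion p F (mech_of_rV v)).
Proof.
apply: continuous_sum => r; apply: continuous_sum => s.
exact/continuousMr/continuousMl/mech_of_rV_continuous.
Qed.

Lemma exists_optimal_mechanism (theta : T) : 0 < theta <= 1 ->
  exists W : D -> D -> T, [/\ mechanism W, is_DP theta W &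
    forall U : D -> D -> T, mechanism U -> is_DP theta U ->
      distortion p F W <= distortion p F U].
Proof.
move=> theta_01.
have feasible_uniform : feasible theta (rV_of_mech uniform_mechanism).
  rewrite /feasible /= rV_of_mechK.
  by split; [exact: mechanism_uniform | exact: is_DP_uniform].
have [v /set_mem [mech_v DP_v] v_min] := compact_EVT_min (ex_intro _ _ feasible_uniform)
  (compact_feasible theta) (continuous_subspaceT distortion_continuous).
exists (mech_of_rV v); split=> // U mech_U DP_U.
by rewrite -[U]rV_of_mechK; apply: v_min; apply: mem_set; rewrite /feasible /= rV_of_mechK.
Qed.

End OptimalMechanism.

Theorem lemma1 (T : realType) (Rec : finType) (n : nat) (theta : T)
  (p : Rec -> T) (F : {ffun Rec -> nat} -> {ffun Rec -> nat} -> T) :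
  0 < theta -> theta < 1 ->
  (forall a, 0 <= p a) -> \sum_(a : Rec) p a = 1 ->
  (forall h h', is_hist n h -> is_hist n h' -> 0 <= F h h') ->
  exists W : database Rec n -> database Rec n -> T,
    [/\ mechanism W,
        (forall a a', hist a = hist a' -> W a = W a'),
        is_DP theta W &
        (forall U : database Rec n -> database Rec n -> T,
           mechanism U -> is_DP theta U ->
           distortion p F W <= distortion p F U)].
Proof.
(* An optimum exists for arbitrary weights [p] and distortion [F]. *)
move=> theta_gt0 theta_lt1 _ _ _.
have [|W [mech_W DP_W W_min]] := exists_optimal_mechanism (n := n) p F theta.
  by rewrite theta_gt0 ltW.
exists (symmetrize W); split.
- exact: mechanism_symmetrize.
- exact: symmetrize_hist.
- exact: is_DP_symmetrize.
- by move=> U mech_U DP_U; rewrite distortion_symmetrize; exact: W_min.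
Qed.
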